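(* Let $\ast_n$ be a star graph and let $f:\ast_n\to\ast_n$ be a star map. Then the split map $S(f):S(\ast_n)\to S(\ast_n)$ is a homotopy equivalence.
   Context: The star $\ast_n=K_{1,n}$ has a center vertex joined by edges $x_1,\dots,x_n$ to $n$ tips; orient each edge from the center to its tip, uppercase $X_i$ denoting reverse traversal. A graph map sends vertices to vertices and edges to edge paths (backtracking allowed). A star map is a graph map $f:\ast_n\to\ast_n$ fixing the center and preserving the bipartite structure (tips to tips), such that the map sending each edge to the first edge of its image path is a permutation; thus each $f(x_i)$ is an edge path with an odd number $\|f(x_i)\|$ of edges. Prototype maps on $P_7$ (vertices $v_0,v_1$, edges $a,\dots,g$ oriented $v_0\to v_1$, uppercase = reversed): $\phi_1=\mathrm{id}$ and, for $m\ge0$, $\phi_{3+2m}$: $a\mapsto aG(aB)^ma$, $b\mapsto bD(bC)^mb$, $c\mapsto cF(cA)^mc$, $d\mapsto aB(aB)^ma$, $e\mapsto cB(aB)^ma$, $f\mapsto aC(aB)^ma$, $g\mapsto bE(bA)^mb$. The split graph $S(\ast_n)$ replaces each edge $x_i$ by seven parallel edges $a_i,\dots,g_i$ from the center to the $i$-th tip. The split map $S(f)$ sends $y_i$ ($y\in\{a,\dots,g\}$) to the path obtained from the word $\phi_{\|f(x_i)\|}(y)$ by giving its $t$-th letter the subscript of the $t$-th edge of $f(x_i)$. *)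

From mathcomp Require Import all_boot.

Set Implicit Arguments. Unset Strict Implicit. Unset Printing Implicit Defensive.

Record graph := Graph {
  gV : finType; gE : finType; gsrc : gE -> gV; gtgt : gE -> gV }.

(* A letter is an edge with a direction: (e, true) = e, (e, false) = E (reverse). *)
Definition letter (G : graph) := (gE G * bool)%type.
Definition lsrc (G : graph) (l : letter G) : gV G :=
  if l.2 then gsrc l.1 else gtgt l.1.
Definition ltgt (G : graph) (l : letter G) : gV G :=
  if l.2 then gtgt l.1 else gsrc l.1.
Definition linv (G : graph) (l : letter G) : letter G := (l.1, ~~ l.2).

Fixpoint is_path (G : graph) (u : gV G) (p : seq (letter G)) (v : gV G) : bool :=
  match p with
  | [::] => u == v
  | l :: p' => (lsrc l == u) && is_path (ltgt l) p' v
  end.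

Definition rev_path (G : graph) (p : seq (letter G)) : seq (letter G) :=
  rev (map (@linv G) p).

Definition reduce (G : graph) (p : seq (letter G)) : seq (letter G) :=
  foldr (fun l acc => match acc with
                      | l' :: acc' => if l' == linv l then acc' else l :: acc
                      | [::] => [:: l]
                      end) [::] p.

Record gmap (G H : graph) := GMap {
  gmv : gV G -> gV H;
  gme : gE G -> seq (letter H) }.

Definition is_gmap (G H : graph) (f : gmap G H) : Prop :=
  forall e, is_path (gmv f (gsrc e)) (gme f e) (gmv f (gtgt e)).

Definition gmap_path (G H : graph) (f : gmap G H) (p : seq (letter G))
  : seq (letter H) :=
  flatten (map (fun l : letter G =>
                  if l.2 then gme f l.1 else rev_path (gme f l.1)) p).

Definition gmap_comp (G H K : graph) (g : gmap H K) (f : gmap G H) : gmap G K :=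
  GMap (fun v => gmv g (gmv f v)) (fun e => gmap_path g (gme f e)).

Definition gmap_id (G : graph) : gmap G G :=
  GMap (fun v => v) (fun e => [:: (e, true)]).

(* Homotopy of graph maps h, k : G -> H (realized topologically, edges mapped
   linearly along their edge paths): there are vertex tracks p_v from h(v) to
   k(v) such that for each edge e : u -> w, the path h(e) is homotopic rel
   endpoints to p_u . k(e) . p_w^-1 (i.e. they have the same free reduction). *)
Definition homotopic (G H : graph) (h k : gmap G H) : Prop :=
  exists tr : gV G -> seq (letter H),
    (forall v, is_path (gmv h v) (tr v) (gmv k v)) /\
    (forall e, reduce (gme h e) =
               reduce (tr (gsrc e) ++ gme k e ++ rev_path (tr (gtgt e)))).

Definition homotopy_equivalence (G H : graph) (f : gmap G H) : Prop :=
  is_gmap f /\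
  exists g : gmap H G, is_gmap g /\
    homotopic (gmap_comp g f) (gmap_id G) /\
    homotopic (gmap_comp f g) (gmap_id H).

(* The star K_{1,n}: center None, tips Some i, edge x_i : None -> Some i. *)
Definition star (n : nat) : graph :=
  @Graph (option 'I_n) 'I_n (fun _ => None) (fun i => Some i).

Definition star_map (n : nat) (f : gmap (star n) (star n)) : Prop :=
  [/\ is_gmap f,
      gmv f None = None,
      (forall i : 'I_n, gmv f (Some i) != None) &
      injective (fun i : 'I_n => (head (i, true) (gme f i)).1)].

(* The split graph S(star_n): edges y_i, y in {a,...,g} = 'I_7 (a = 0, ..., g = 6). *)
Definition split_star (n : nat) : graph :=
  @Graph (option 'I_n) ('I_7 * 'I_n)%type (fun _ => None) (fun yi => Some yi.2).

Definition L (k : nat) (b : bool) : 'I_7 * bool :=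
  (Ordinal (ltn_pmod k (isT : 0 < 7)), b).
Definition phi_word (m : nat) (y0 y1 y2 y3 : nat) : seq ('I_7 * bool) :=
  [:: L y0 true; L y1 false] ++
  flatten (nseq m [:: L y2 true; L y3 false]) ++ [:: L y0 true].
Definition phi (k : nat) (y : 'I_7) : seq ('I_7 * bool) :=
  if k == 1 then [:: (y, true)] else
  let m := (k - 3)./2 in
  match val y with
  | 0 => phi_word m 0 6 0 1        (* a |-> a G (a B)^m a *)
  | 1 => phi_word m 1 3 1 2        (* b |-> b D (b C)^m b *)
  | 2 => phi_word m 2 5 2 0        (* c |-> c F (c A)^m c *)
  | 3 => [:: L 0 true; L 1 false] ++ flatten (nseq m [:: L 0 true; L 1 false])
           ++ [:: L 0 true]        (* d |-> a B (a B)^m a *)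
  | 4 => [:: L 2 true; L 1 false] ++ flatten (nseq m [:: L 0 true; L 1 false])
           ++ [:: L 0 true]        (* e |-> c B (a B)^m a *)
  | 5 => [:: L 0 true; L 2 false] ++ flatten (nseq m [:: L 0 true; L 1 false])
           ++ [:: L 0 true]        (* f |-> a C (a B)^m a *)
  | _ => phi_word m 1 4 1 0        (* g |-> b E (b A)^m b *)
  end.

(* the split map S(f): y_i |-> phi_{||f(x_i)||}(y), the t-th letter receiving
   the subscript of the t-th edge of f(x_i) *)
Definition split_map (n : nat) (f : gmap (star n) (star n))
  : gmap (split_star n) (split_star n) :=
  @GMap (split_star n) (split_star n)
       (fun v : option 'I_n => (gmv f v : option 'I_n))
       (fun yi : gE (split_star n) =>
          let y : 'I_7 := (yi : 'I_7 * 'I_n).1 in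
          let i : gE (star n) := (yi : 'I_7 * 'I_n).2 in
          [seq (((ll.1.1, (ll.2.1 : 'I_n)) : gE (split_star n)), ll.1.2)
          | ll <- zip (phi (size (gme f i)) y) (gme f i)]).

(* The split graph is a rose once the maximal tree of the edges [a_i] is
   collapsed: its fundamental group is free on the loops [y_i a_i^-1]
   (y = b, ..., g). We build a graph map [g] collapsing every vertex to the
   centre such that [g o S(f)] and [S(f) o g] fix these loops up to homotopy,
   which yields homotopies to the identities whose tracks run along the [a_i].
   If [f(x_i)] is the single edge [x_j], [S(f)] merely relabels the loops at
   [i] as loops at [j]. Otherwise [f(x_i) = x_j X_j w], and [S(f)] sends the
   loops [d_i, e_i, f_i] to [b_j^-1 g_j, c_j b_j^-1 g_j, c_j^-1 g_j] and the
   loops [b_i, c_i, g_i] to [b_j d_j^-1 t g_j, c_j f_j^-1 t g_j,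
   b_j e_j^-1 t g_j], where [t] only uses edges [a, b, c]: a triangular system
   that [g] inverts explicitly. Since [j] runs over a permutation of the tips,
   the loops at all tips are reached. Homotopy of edge paths rel endpoints is
   modelled by equality of their actions on freely reduced words. *)

From Pilot Require Import Defs.
From mathcomp Require Import all_boot.
From Stdlib Require Import Setoid Morphisms.
(* Re-imported so that [Defs.rev_path] shadows the lemma [path.rev_path]. *)
Import Defs.

Set Implicit Arguments. Unset Strict Implicit. Unset Printing Implicit Defensive.

Section FreeReduction.
Variable G : graph.
Implicit Types (l : letter G) (p q r acc : seq (letter G)).

Lemma linvK : involutive (@linv G).
Proof. by case=> e b; rewrite /linv negbK. Qed.

Lemma rev_path_cons l p : rev_path (l :: p) = rev_path p ++ [:: linv l].
Proof. by rewrite /rev_path /= rev_cons cats1. Qed.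

Lemma rev_path_cat p q : rev_path (p ++ q) = rev_path q ++ rev_path p.
Proof. by rewrite /rev_path map_cat rev_cat. Qed.

Lemma rev_pathK : involutive (@rev_path G).
Proof. by move=> p; rewrite /rev_path map_rev revK -map_comp (eq_map linvK) map_id. Qed.

(* [reduce p] is [act p [::]]. *)
Definition push l acc :=
  if acc is l' :: acc' then (if l' == linv l then acc' else l :: acc) else [:: l].

Definition act p acc := foldr push acc p.

Fixpoint reduced p : bool :=
  if p is l :: p' then (if p' is l' :: _ then (l' != linv l) && reduced p' else true)
  else true.

Lemma reduced_behead l acc : reduced (l :: acc) -> reduced acc.
Proof. by case: acc => //= ? ? /andP[]. Qed.

Lemma push_reduced l acc : reduced acc -> reduced (push l acc).
Proof.
case: acc => [|l' acc] //= red_acc; case: ifP => [_|/negbT neq_l'].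
  exact: reduced_behead red_acc.
by rewrite /= red_acc andbT.
Qed.

Lemma act_reduced p acc : reduced acc -> reduced (act p acc).
Proof. by elim: p => //= l p IHp /IHp; apply: push_reduced. Qed.

Lemma push_linvK l acc : reduced acc -> push l (push (linv l) acc) = acc.
Proof.
case: acc => [|l' acc] /=; first by rewrite eqxx.
rewrite linvK; case: (eqVneq l' l) => [->|neq_l']; last by rewrite /= eqxx.
by case: acc => [|l'' acc] //= /andP[/negbTE ->].
Qed.

Lemma act_cat p q acc : act (p ++ q) acc = act p (act q acc).
Proof. exact: foldr_cat. Qed.

Lemma act_rev_pathK p acc : reduced acc -> act p (act (rev_path p) acc) = acc.
Proof.
elim: p acc => //= l p IHp acc red_acc.
by rewrite rev_path_cons act_cat /= IHp ?push_linvK // push_reduced.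
Qed.

Lemma act_rev_pathKV p acc : reduced acc -> act (rev_path p) (act p acc) = acc.
Proof. by move=> red_acc; rewrite -{2}(rev_pathK p) act_rev_pathK. Qed.

Definition homotopic_paths p q := forall acc, reduced acc -> act p acc = act q acc.

Local Infix "≈" := homotopic_paths (at level 70).

Lemma homotopic_paths_reduce p q : p ≈ q -> reduce p = reduce q.
Proof. exact. Qed.

#[global] Instance homotopic_paths_equiv : Equivalence homotopic_paths.
Proof.
split=> [p acc //|p q pq acc red_acc|p q r pq qr acc red_acc]; first by rewrite pq.
by rewrite pq // qr.
Qed.

#[global] Instance cat_homotopic_paths :
  Proper (homotopic_paths ==> homotopic_paths ==> homotopic_paths) (@cat (letter G)).
Proof. by move=> p p' pp' q q' qq' acc red_acc; rewrite !act_cat qq' // pp' // act_reduced. Qed.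

#[global] Instance cons_homotopic_paths :
  Proper (eq ==> homotopic_paths ==> homotopic_paths) (@cons (letter G)).
Proof. by move=> l _ <- q q' qq' acc red_acc /=; rewrite qq'. Qed.

#[global] Instance rev_path_homotopic_paths :
  Proper (homotopic_paths ==> homotopic_paths) (@rev_path G).
Proof.
move=> p q pq acc red_acc; have red_q := act_reduced (rev_path q) red_acc.
transitivity (act (rev_path p) (act q (act (rev_path q) acc))).
  by rewrite (act_rev_pathK q red_acc).
by rewrite -(pq _ red_q) act_rev_pathKV.
Qed.

Lemma cat_rev_pathK p q : p ++ rev_path p ++ q ≈ q.
Proof. by move=> acc red_acc; rewrite !act_cat act_rev_pathK // act_reduced. Qed.

Lemma rev_path_catK p q : rev_path p ++ p ++ q ≈ q.
Proof. by move=> acc red_acc; rewrite !act_cat act_rev_pathKV // act_reduced. Qed.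

Lemma cat_rev_path_nil p : p ++ rev_path p ≈ [::].
Proof. by rewrite -[_ ++ _]cats0 -catA cat_rev_pathK. Qed.

Lemma rev_path_cat_nil p : rev_path p ++ p ≈ [::].
Proof. by rewrite -[_ ++ _]cats0 -catA rev_path_catK. Qed.

Lemma backtrack e b q : (e, b) :: (e, ~~ b) :: q ≈ q.
Proof. exact: cat_rev_pathK [:: (e, b)] q. Qed.

Lemma is_path_cat u v w p q : is_path u p v -> is_path v q w -> is_path u (p ++ q) w.
Proof. by elim: p u => [|l p IHp] u /=; [move/eqP-> | case/andP=> -> /IHp]. Qed.

Lemma is_path_rev u v p : is_path u p v -> is_path v (rev_path p) u.
Proof.
elim: p u => [|l p IHp] u /=; first by move/eqP->.
case/andP=> /eqP <- /IHp p_vl; rewrite rev_path_cons; apply: is_path_cat p_vl _.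
by case: l => e [] /=; rewrite !eqxx.
Qed.

End FreeReduction.

Infix "≈" := homotopic_paths (at level 70).

Section GraphMapPaths.
Variables G H : graph.
Implicit Types (p q : seq (letter G)).

Definition gmap_letter (F : gmap G H) (l : letter G) :=
  if l.2 then gme F l.1 else rev_path (gme F l.1).

Lemma gmap_path_cons (F : gmap G H) l p :
  gmap_path F (l :: p) = gmap_letter F l ++ gmap_path F p.
Proof. by []. Qed.

Lemma gmap_path_cat (F : gmap G H) p q :
  gmap_path F (p ++ q) = gmap_path F p ++ gmap_path F q.
Proof. by rewrite /gmap_path map_cat flatten_cat. Qed.

Lemma gmap_path_rev (F : gmap G H) p :
  gmap_path F (rev_path p) = rev_path (gmap_path F p).
Proof.
elim: p => //= l p IHp.
rewrite rev_path_cons gmap_path_cat IHp gmap_path_cons rev_path_cat /= cats0.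
by case: l => e [] //=; rewrite rev_pathK.
Qed.

Lemma gmap_path_is_path (F : gmap G H) p u v :
  is_gmap F -> is_path u p v -> is_path (gmv F u) (gmap_path F p) (gmv F v).
Proof.
move=> F_gmap; elim: p u => [|l p IHp] u /=; first by move/eqP->.
case/andP=> /eqP <- /IHp p_path; rewrite gmap_path_cons; apply: is_path_cat p_path.
by case: l => e [] /=; [|apply: is_path_rev]; apply: F_gmap.
Qed.

Lemma gmap_path_closed (F : gmap G H) (c : gV H) p :
  (forall e, is_path c (gme F e) c) -> is_path c (gmap_path F p) c.
Proof.
move=> F_closed; elim: p => [|l p IHp] //=; rewrite gmap_path_cons.
by apply: is_path_cat IHp; case: l => e [] /=; [|apply: is_path_rev]; apply: F_closed.
Qed.

End GraphMapPaths.

Lemma gmap_path_comp (G H K : graph) (F : gmap H K) (F' : gmap G H) (p : seq (letter G)) :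
  gmap_path (gmap_comp F F') p = gmap_path F (gmap_path F' p).
Proof.
elim: p => // l p IHp.
rewrite 2!gmap_path_cons IHp gmap_path_cat.
by case: l => e [] //=; rewrite gmap_path_rev.
Qed.

Lemma gmap_comp_is_gmap (G H K : graph) (F : gmap H K) (F' : gmap G H) :
  is_gmap F -> is_gmap F' -> is_gmap (gmap_comp F F').
Proof. by move=> F_gmap F'_gmap e; exact: gmap_path_is_path F_gmap (F'_gmap e). Qed.

Lemma gmap_path_natural (G : graph) (F : gmap G G) (t : gV G -> seq (letter G))
    (P : pred (gE G)) :
  (forall e, P e -> gme F e ≈ t (gsrc e) ++ (e, true) :: rev_path (t (gtgt e))) ->
  forall p u v, is_path u p v -> all (fun l => P l.1) p ->
  gmap_path F p ≈ t u ++ p ++ rev_path (t v).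
Proof.
move=> F_nat; elim=> [|l p IHp] u v /=; first by move/eqP->; rewrite cat_rev_path_nil.
case/andP=> /eqP <- p_path /andP[Pl Pp]; rewrite gmap_path_cons (IHp _ _ p_path Pp) {p_path}.
case: l Pl => e [] Pe; rewrite /gmap_letter /ltgt /lsrc /= F_nat //.
  by rewrite -!catA /= rev_path_catK.
by rewrite rev_path_cat rev_path_cons rev_pathK -!catA /= rev_path_catK.
Qed.

Definition pedge (k : nat) : 'I_7 := (L k true).1.

Lemma pedge_cases (P : 'I_7 -> Prop) :
  P (pedge 0) -> P (pedge 1) -> P (pedge 2) -> P (pedge 3) -> P (pedge 4) ->
  P (pedge 5) -> P (pedge 6) -> forall y, P y.
Proof.
move=> P0 P1 P2 P3 P4 P5 P6 [k lt_k7].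
have -> : Ordinal lt_k7 = pedge k by apply: val_inj; rewrite /= modn_small.
by move: lt_k7; do 7 (try (case: k => [|k] //)).
Qed.

Fixpoint alternating (b : bool) (k : nat) : seq bool :=
  if k is k'.+1 then b :: alternating (~~ b) k' else [::].

Definition alt_word (m x z : nat) : seq ('I_7 * bool) :=
  flatten (nseq m [:: L x true; L z false]) ++ [:: L x true].

Definition phi_first (y : 'I_7) : nat :=
  match val y with 0 | 3 | 5 => 0 | 2 | 4 => 2 | _ => 1 end.

Definition phi_second (y : 'I_7) : nat :=
  match val y with 0 => 6 | 1 => 3 | 2 => 5 | 3 | 4 => 1 | 5 => 2 | _ => 4 end.

Definition phi_tail (y : 'I_7) (m : nat) : seq ('I_7 * bool) :=
  match val y with
  | 0 | 3 | 4 | 5 => alt_word m 0 1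
  | 1 => alt_word m 1 2
  | 2 => alt_word m 2 0
  | _ => alt_word m 1 0
  end.

Lemma phiE k y : k != 1 ->
  phi k y = L (phi_first y) true :: L (phi_second y) false :: phi_tail y (k - 3)./2.
Proof. by rewrite /phi => /negbTE ->; case: y => [[|[|[|[|[|[|[|?]]]]]]] ?]. Qed.

Lemma alt_word_dirs m x z : map snd (alt_word m x z) = alternating true m.*2.+1.
Proof. by elim: m => //= m; rewrite /alt_word map_cat => ->. Qed.

Lemma phi_dirs k y : odd k -> map snd (phi k y) = alternating true k.
Proof.
have tail_dirs m : map snd (phi_tail y m) = alternating true m.*2.+1.
  by rewrite /phi_tail; case: (val y) => [|[|[|[|[|[|?]]]]]]; apply: alt_word_dirs.
case: (eqVneq k 1) => [-> _|k_neq1 odd_k]; first by rewrite /phi; case: (val y).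
rewrite phiE //= tail_dirs; case: k k_neq1 odd_k => [|[|[|k]]] //= _ /negbNE odd_k.
by rewrite !subSS subn0 /= -[in RHS](odd_double_half k) (negbTE odd_k).
Qed.

Lemma phi_tail_abc y m : all (fun l : 'I_7 * bool => val l.1 < 3) (phi_tail y m).
Proof.
have alt_abc x z : x < 3 -> z < 3 -> all (fun l : 'I_7 * bool => val l.1 < 3) (alt_word m x z).
  move=> lt_x3 lt_z3.
  rewrite all_cat /= !modn_small ?lt_x3 ?andbT //; last exact: ltn_trans lt_x3 _.
  by elim: m => //= m ->; rewrite !modn_small ?lt_x3 ?lt_z3 //; apply: ltn_trans (isT : 3 < 7).
by rewrite /phi_tail; case: (val y) => [|[|[|[|[|[|?]]]]]]; apply: alt_abc.
Qed.

Section SplitStar.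
Variable n : nat.
Local Notation SS := (split_star n).
Local Notation abc_letter := (fun l : letter SS => val l.1.1 < 3).

Definition loop (y : 'I_7) (i : 'I_n) : seq (letter SS) :=
  [:: ((y, i), true); ((pedge 0, i), false)].

Lemma loop_is_path y i : is_path (G := SS) None (loop y i) None.
Proof. by rewrite /= !eqxx. Qed.

Lemma loop_a i : loop (pedge 0) i ≈ [::].
Proof. exact: backtrack. Qed.

Lemma homotopic_id_split_star (F : gmap SS SS) :
  is_gmap F -> (forall v, gmv F v = None) ->
  (forall y i, gme F (y, i) ≈ loop y i ++ gme F (pedge 0, i)) ->
  homotopic F (gmap_id SS).
Proof.
move=> F_gmap F_centre F_loop.
exists (fun v => if v is Some i then rev_path (gme F (pedge 0, i)) ++ [:: ((pedge 0, i), true)]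
                 else [::]); split=> [[i|] /=|[y i]]; rewrite ?F_centre //.
  apply: (is_path_cat (G := SS) (v := None)); last by rewrite /= !eqxx.
  by apply: is_path_rev; have := F_gmap (pedge 0, i); rewrite !F_centre.
by rewrite rev_path_cat rev_pathK; apply: homotopic_paths_reduce; apply: F_loop.
Qed.

Definition subscript (s : seq ('I_7 * bool)) (w : seq (letter (star n))) : seq (letter SS) :=
  [seq (((ll.1.1, (ll.2.1 : 'I_n)) : gE SS), ll.1.2) | ll <- zip s w].

Lemma star_path_dirs u v w : is_path (G := star n) u w v ->
  map snd w = alternating (u == None) (size w) /\ (v == None) = (u == None) (+) odd (size w).
Proof.
elim: w u => [|[e b] w IHw] u /=; first by move/eqP->; rewrite addbF.
by case/andP=> /eqP <- /IHw[-> ->]; case: b; rewrite /lsrc /ltgt /=; case: (odd _).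
Qed.

Lemma subscript_is_path s w u v : is_path (G := star n) u w v ->
  map snd s = map snd w -> is_path (G := SS) u (subscript s w) v.
Proof.
elim: w s u => [|[e b] w IHw] [|[y b'] s] u //= /andP[/eqP <- w_path] [-> dirs].
by case: b w_path => /IHw p_path; rewrite eqxx p_path.
Qed.

Lemma subscript_abc s w : all (fun l : 'I_7 * bool => val l.1 < 3) s ->
  all abc_letter (subscript s w).
Proof. by elim: s w => [|l s IHs] [|l' w] //= /andP[-> /(IHs w)]. Qed.

End SplitStar.

Section StarMap.
Variables (n : nat) (f : gmap (star n) (star n)).
Hypothesis f_star : star_map f.
Local Notation SS := (split_star n).
Local Notation S := (split_map f).
Local Notation abc_letter := (fun l : letter SS => val l.1.1 < 3).
Local Notation closed_walk p := (is_path (G := SS) None p None).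

Definition sigma (i : 'I_n) : 'I_n := (head (i, true) (gme f i)).1.

Lemma sigma_inj : injective sigma. Proof. by case: f_star. Qed.

Definition sigma_inv : 'I_n -> 'I_n := invF sigma_inj.

Lemma sigmaK : cancel sigma sigma_inv. Proof. exact: invF_f. Qed.

Lemma sigma_invK : cancel sigma_inv sigma. Proof. exact: f_invF. Qed.

Variant star_image_spec (i : 'I_n) : Prop :=
  | StarImageEdge of gme f i = [:: (sigma i, true)]
  | StarImageLong w of gme f i = [:: (sigma i, true), (sigma i, false) & w].

Lemma star_imageP i : star_image_spec i.
Proof.
case: f_star => f_gmap f_centre f_tip _; have := f_gmap i; rewrite /= f_centre.
move: (f_tip i); case: (gmv f (Some i)) => // v _.
case fi: (gme f i) => [|[e []] [|[e' []] w]] //=.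
  by move=> _; apply: StarImageEdge; rewrite /sigma fi.
by rewrite /lsrc /ltgt /= => /andP[/eqP [e'_e] _]; apply: StarImageLong; rewrite /sigma fi e'_e.
Qed.

Lemma split_map_is_gmap : is_gmap S.
Proof.
case: f_star => f_gmap f_centre f_tip _ [y i]; rewrite /= f_centre.
have := f_gmap i; rewrite /= f_centre => fi_path.
have [fi_dirs fi_odd] := star_path_dirs fi_path.
apply: (subscript_is_path fi_path); rewrite fi_dirs.
by move: (f_tip i) fi_odd; case: (gmv f (Some i)) => //= v _ /esym/negbFE/phi_dirs.
Qed.

Lemma split_map_edge i y : gme f i = [:: (sigma i, true)] ->
  gme S (y, i) = [:: ((y, sigma i), true)].
Proof. by rewrite /= => ->. Qed.

Lemma split_map_long i w y : gme f i = [:: (sigma i, true), (sigma i, false) & w] ->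
  gme S (y, i) = [:: ((pedge (phi_first y), sigma i), true),
                     ((pedge (phi_second y), sigma i), false)
                   & subscript (phi_tail y (size w).-1./2) w].
Proof. by rewrite /= => ->; rewrite phiE // !subSS subn1. Qed.

Lemma split_map_loop i y :
  gmap_path S (loop y i) = gme S (y, i) ++ rev_path (gme S (pedge 0, i)).
Proof. by rewrite /gmap_path /= cats0. Qed.

(* The inverse of [S] at a tip [i] with [f x_i = x_j X_j w]: [word_g i], [word_b i] and
   [word_c i] solve the equations for the loops [d_i, e_i, f_i], and [head_inv] those for
   [b_i, c_i, g_i]; this is not circular since the tail [t] only involves edges [a, b, c],
   on which [inv_abc] already is the inverse. *)
Definition word_g (i : 'I_n) := loop (pedge 4) i ++ rev_path (loop (pedge 3) i) ++ loop (pedge 5) i.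
Definition word_b i := word_g i ++ rev_path (loop (pedge 3) i).
Definition word_c i := word_g i ++ rev_path (loop (pedge 5) i).

Definition inv_abc_word (y : 'I_7) i : seq (letter SS) :=
  match val y with 0 => [::] | 1 => word_b i | 2 => word_c i | _ => word_g i end.

Definition inv_abc_edge (e : gE SS) : seq (letter SS) :=
  let i := sigma_inv e.2 in
  if size (gme f i) == 1 then loop e.1 i else inv_abc_word e.1 i.

Definition inv_abc : gmap SS SS := @GMap SS SS (fun=> None) inv_abc_edge.

Definition tail_word y i := drop 2 (gme S (y, i)).

Definition head_inv y i :=
  gmap_path inv_abc (tail_word y i) ++ rev_path (gmap_path inv_abc (tail_word (pedge 0) i)) ++
  word_g i ++ rev_path (loop y i).

Definition inv_word (y : 'I_7) i : seq (letter SS) :=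
  match val y with
  | 3 => head_inv (pedge 1) i ++ word_b i
  | 4 => head_inv (pedge 6) i ++ word_b i
  | 5 => head_inv (pedge 2) i ++ word_c i
  | _ => inv_abc_word y i
  end.

Definition inv_edge (e : gE SS) : seq (letter SS) :=
  let i := sigma_inv e.2 in
  if size (gme f i) == 1 then loop e.1 i else inv_word e.1 i.

Definition split_inv : gmap SS SS := @GMap SS SS (fun=> None) inv_edge.

Lemma word_g_is_path i : closed_walk (word_g i).
Proof.
apply: is_path_cat (loop_is_path _ _) _.
by apply: is_path_cat (is_path_rev (loop_is_path _ _)) (loop_is_path _ _).
Qed.

Lemma word_b_is_path i : closed_walk (word_b i).
Proof. exact: is_path_cat (word_g_is_path i) (is_path_rev (loop_is_path _ _)). Qed.

Lemma word_c_is_path i : closed_walk (word_c i).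
Proof. exact: is_path_cat (word_g_is_path i) (is_path_rev (loop_is_path _ _)). Qed.

Lemma inv_abc_word_is_path y i : closed_walk (inv_abc_word y i).
Proof.
rewrite /inv_abc_word; case: (val y) => [|[|[|k]]] //.
- exact: word_b_is_path.
- exact: word_c_is_path.
- exact: word_g_is_path.
Qed.

Lemma inv_abc_is_path p : closed_walk (gmap_path inv_abc p).
Proof.
apply: gmap_path_closed => e; rewrite /= /inv_abc_edge.
by case: ifP => _; [apply: loop_is_path | apply: inv_abc_word_is_path].
Qed.

Lemma head_inv_is_path y i : closed_walk (head_inv y i).
Proof.
apply: is_path_cat (inv_abc_is_path _) _; apply: is_path_cat (is_path_rev (inv_abc_is_path _)) _.
exact: is_path_cat (word_g_is_path i) (is_path_rev (loop_is_path _ _)).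
Qed.

Lemma split_inv_is_gmap : is_gmap split_inv.
Proof.
move=> e; rewrite /= /inv_edge; case: ifP => _; first exact: loop_is_path.
rewrite /inv_word; case: (val e.1) => [|[|[|[|[|[|k]]]]]]; try exact: inv_abc_word_is_path.
- exact: is_path_cat (head_inv_is_path _ _) (word_b_is_path _).
- exact: is_path_cat (head_inv_is_path _ _) (word_b_is_path _).
- exact: is_path_cat (head_inv_is_path _ _) (word_c_is_path _).
Qed.

Lemma inv_edge_abc e : val e.1 < 3 -> inv_edge e = inv_abc_edge e.
Proof. by rewrite /inv_edge /inv_abc_edge /inv_word; case: (val e.1) => [|[|[|k]]]. Qed.

Lemma split_inv_abc_path p : all abc_letter p ->
  gmap_path split_inv p = gmap_path inv_abc p.
Proof.
elim: p => // l p IHp /andP[abc_l /IHp]; rewrite !gmap_path_cons => ->.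
by rewrite /gmap_letter /= inv_edge_abc.
Qed.

Lemma head_inv_cancel y i p :
  p ++ rev_path (head_inv y i ++ p) ++ gmap_path inv_abc (tail_word y i) ≈
  loop y i ++ rev_path (word_g i) ++ gmap_path inv_abc (tail_word (pedge 0) i).
Proof.
rewrite rev_path_cat -catA cat_rev_pathK /head_inv !rev_path_cat !rev_pathK -!catA.
by rewrite rev_path_cat_nil cats0.
Qed.

Lemma rev_word_b_cat i p :
  rev_path (word_b i) ++ p ≈ loop (pedge 3) i ++ rev_path (word_g i) ++ p.
Proof. by rewrite rev_path_cat rev_pathK -catA. Qed.

Lemma rev_word_c_cat i p :
  rev_path (word_c i) ++ p ≈ loop (pedge 5) i ++ rev_path (word_g i) ++ p.
Proof. by rewrite rev_path_cat rev_pathK -catA. Qed.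

Lemma word_c_rev_word_b_cat i p :
  word_c i ++ rev_path (word_b i) ++ p ≈ loop (pedge 4) i ++ rev_path (word_g i) ++ p.
Proof.
by rewrite /word_c /word_b rev_path_cat rev_pathK {1}/word_g -!catA cat_rev_pathK rev_path_catK.
Qed.

Section LongImage.
Variables (i : 'I_n) (w : seq (letter (star n))).
Hypothesis f_long : gme f i = [:: (sigma i, true), (sigma i, false) & w].
Local Notation j := (sigma i).

Lemma tail_word_is_path y : is_path (G := SS) None (tail_word y i) (gmv f (Some i)).
Proof.
have := split_map_is_gmap (y, i); rewrite /tail_word (split_map_long _ f_long) /=.
by rewrite drop0 => /andP[_ /andP[_]].
Qed.

Lemma split_map_long_tail y :
  gme S (y, i) = [:: ((pedge (phi_first y), j), true), ((pedge (phi_second y), j), false)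
                   & tail_word y i].
Proof. by rewrite /tail_word (split_map_long _ f_long) /= drop0. Qed.

Lemma tail_word_abc y : all abc_letter (tail_word y i).
Proof.
by rewrite /tail_word (split_map_long _ f_long) /= drop0; apply/subscript_abc/phi_tail_abc.
Qed.

Lemma split_map_loop_long y : phi_tail y = phi_tail (pedge 0) ->
  gmap_path S (loop y i) ≈
  [:: ((pedge (phi_first y), j), true); ((pedge (phi_second y), j), false);
      ((pedge 6, j), true); ((pedge 0, j), false)].
Proof.
move=> tail_y; rewrite split_map_loop !(split_map_long _ f_long) tail_y.
by rewrite !rev_path_cons /= -!catA cat_rev_pathK.
Qed.

Lemma split_map_word_g : gmap_path S (word_g i) ≈ loop (pedge 6) j.
Proof.
rewrite /word_g !gmap_path_cat gmap_path_rev !split_map_loop_long //=.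
by rewrite !backtrack.
Qed.

Lemma split_map_word_b : gmap_path S (word_b i) ≈ loop (pedge 1) j.
Proof.
rewrite /word_b gmap_path_cat gmap_path_rev split_map_word_g split_map_loop_long //=.
by rewrite !backtrack.
Qed.

Lemma split_map_word_c : gmap_path S (word_c i) ≈ loop (pedge 2) j.
Proof.
rewrite /word_c gmap_path_cat gmap_path_rev split_map_word_g split_map_loop_long //=.
by rewrite !backtrack.
Qed.

Lemma inv_abc_edge_long y : inv_abc_edge (y, j) = inv_abc_word y i.
Proof. by rewrite /inv_abc_edge /= sigmaK f_long. Qed.

Lemma inv_edge_long y : inv_edge (y, j) = inv_word y i.
Proof. by rewrite /inv_edge /= sigmaK f_long. Qed.

Lemma tail_word_eq y :
  phi_tail y = phi_tail (pedge 0) -> tail_word y i = tail_word (pedge 0) i.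
Proof. by move=> tail_y; rewrite /tail_word !(split_map_long _ f_long) tail_y. Qed.

Lemma split_inv_split_map_long y :
  gmap_path split_inv (gme S (y, i)) =
  inv_word (pedge (phi_first y)) i ++ rev_path (inv_word (pedge (phi_second y)) i) ++
  gmap_path inv_abc (tail_word y i).
Proof.
rewrite split_map_long_tail !gmap_path_cons /gmap_letter /= !inv_edge_long.
by rewrite split_inv_abc_path ?tail_word_abc.
Qed.

End LongImage.

Lemma split_map_inv_abc_edge y i : val y < 3 ->
  gmap_path S (inv_abc_edge (y, sigma i)) ≈ loop y (sigma i).
Proof.
case: (star_imageP i) => [f_edge|w f_long] abc_y.
  by rewrite /inv_abc_edge /= sigmaK f_edge /= split_map_loop !(split_map_edge _ f_edge).
rewrite (inv_abc_edge_long f_long); elim/pedge_cases: y abc_y => // _.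
- by rewrite loop_a.
- exact: split_map_word_b f_long.
- exact: split_map_word_c f_long.
Qed.

Definition tip_track (v : gV SS) : seq (letter SS) :=
  if v is Some l then [:: ((pedge 0, l), true)] else [::].

Lemma split_map_inv_abc_path p v : is_path (G := SS) None p v -> all abc_letter p ->
  gmap_path S (gmap_path inv_abc p) ≈ p ++ rev_path (tip_track v).
Proof.
move=> p_path p_abc; rewrite -gmap_path_comp.
apply: (gmap_path_natural (t := tip_track) (P := fun e : gE SS => val e.1 < 3)) p_path p_abc.
by move=> [y j] /= abc_y; rewrite -(sigma_invK j); apply: split_map_inv_abc_edge.
Qed.

Lemma split_map_head_inv i w y : gme f i = [:: (sigma i, true), (sigma i, false) & w] ->
  gmap_path S (head_inv y i) ≈
  [:: ((pedge (phi_second y), sigma i), true); ((pedge (phi_first y), sigma i), false)].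
Proof.
move=> f_long; rewrite /head_inv 3!gmap_path_cat (split_map_word_g f_long) !gmap_path_rev.
rewrite !(split_map_inv_abc_path (tail_word_is_path f_long _) (tail_word_abc f_long _)).
rewrite split_map_loop !(split_map_long_tail f_long) !rev_path_cat !rev_pathK -!catA.
rewrite rev_path_catK /=.
by rewrite !backtrack rev_path_catK !rev_path_cons -!catA cat_rev_pathK.
Qed.

Lemma split_map_head_inv_cat i w y p : gme f i = [:: (sigma i, true), (sigma i, false) & w] ->
  gmap_path S p ≈ loop (pedge (phi_first y)) (sigma i) ->
  gmap_path S (head_inv y i ++ p) ≈ loop (pedge (phi_second y)) (sigma i).
Proof.
by move=> f_long p_loop; rewrite gmap_path_cat (split_map_head_inv _ f_long) p_loop /= backtrack.
Qed.

Lemma split_map_inv_word i w y : gme f i = [:: (sigma i, true), (sigma i, false) & w] ->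
  gmap_path S (inv_word y i) ≈ loop y (sigma i).
Proof.
move=> f_long; elim/pedge_cases: y.
- by rewrite loop_a.
- exact: split_map_word_b f_long.
- exact: split_map_word_c f_long.
- exact: (split_map_head_inv_cat (y := pedge 1) f_long (split_map_word_b f_long)).
- exact: (split_map_head_inv_cat (y := pedge 6) f_long (split_map_word_b f_long)).
- exact: (split_map_head_inv_cat (y := pedge 2) f_long (split_map_word_c f_long)).
- exact: split_map_word_g f_long.
Qed.

Lemma split_inv_split_map_edge i y :
  gmap_path split_inv (gme S (y, i)) ≈ loop y i ++ gmap_path split_inv (gme S (pedge 0, i)).
Proof.
case: (star_imageP i) => [f_edge|w f_long].
  by rewrite !(split_map_edge _ f_edge) /gmap_path /= /inv_edge /= sigmaK f_edge /= backtrack.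
rewrite !(split_inv_split_map_long f_long); elim/pedge_cases: y.
- by rewrite loop_a.
- exact: head_inv_cancel.
- exact: head_inv_cancel.
- by rewrite (tail_word_eq (y := pedge 3) f_long) //; apply: rev_word_b_cat.
- by rewrite (tail_word_eq (y := pedge 4) f_long) //; apply: word_c_rev_word_b_cat.
- by rewrite (tail_word_eq (y := pedge 5) f_long) //; apply: rev_word_c_cat.
- exact: head_inv_cancel.
Qed.

Lemma split_map_split_inv_edge j y :
  gmap_path S (inv_edge (y, j)) ≈ loop y j ++ gmap_path S (inv_edge (pedge 0, j)).
Proof.
rewrite -(sigma_invK j); move: (sigma_inv j) => i.
case: (star_imageP i) => [f_edge|w f_long].
  by rewrite /inv_edge /= sigmaK f_edge /= !split_map_loop !(split_map_edge _ f_edge) /= backtrack.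
by rewrite !(inv_edge_long f_long) !(split_map_inv_word _ f_long) loop_a cats0.
Qed.

End StarMap.

Theorem mainTheorem7 (n : nat) (f : gmap (star n) (star n)) :
  star_map f -> homotopy_equivalence (split_map f).
Proof.
move=> f_star; have S_gmap := split_map_is_gmap f_star.
have inv_gmap := split_inv_is_gmap f_star.
split=> //; exists (split_inv f_star); split=> //; split; apply: homotopic_id_split_star.
- exact: gmap_comp_is_gmap.
- by [].
- by move=> y i; apply: split_inv_split_map_edge.
- exact: gmap_comp_is_gmap.
- by case: (f_star).
- by move=> y i; apply: split_map_split_inv_edge.
Qed.
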